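(* Let $L$ be a shift and $\mu$ a $\sigma$-invariant, nonatomic, regular Borel probability measure on $L$ that is positive on nonempty cylinders. For each letter $a\in A$ let $I_{L,a}=\{x\in I:\phi^{-1}(\iota(x))\in Cyl_L(a)\}$, where $I=[0,1)$. Then $I=\bigsqcup_{a\in A}I_{L,a}$, and each nonempty $I_{L,a}$ is a right-open interval. Moreover $T_L$ is right-continuous on $I$ and increasing on each $I_{L,a}$.
   Context: $A$ is a finite totally ordered alphabet. $A^{\mathbb N}$ has the lexicographic order and the Cantor topology, and $\sigma$ deletes the first letter. A shift is a closed $L\subseteq A^{\mathbb N}$ with $\sigma(L)\subseteq L$, and $Cyl_L(v)=\{w\in L:v\text{ prefix of }w\}$. For $w\le w'$ in $L$, $[w,w']=\{w''\in L:w\le w''\le w'\}$, and $w_{L,min}=\min L$. Construction. Put $\phi_\mu(w)=\mu([w_{L,min},w])$. Let $Z_0$ be the set of $x\in[0,1]$ with $|\phi_\mu^{-1}(x)|\ge 2$; each such preimage consists of exactly two consecutive words. Let $\hat I=[0,1]\sqcup Z_0^-$, where $Z_0^-=\{z^-:z\in Z_0\}$ is a disjoint copy of $Z_0$. Order $\hat I$ so that $z^-<z$ with nothing in between, extending the order of $[0,1]$, and give it the order topology. Let $\iota$ be the inclusion $[0,1]\to\hat I$, and let $\kappa:\hat I\to[0,1]$ be the identity on $[0,1]$ with $z^-\mapsto z$. Define $\phi(w)=(\phi_\mu(w))^-$ if $\phi_\mu^{-1}(\phi_\mu(w))=\{w,w'\}$ with $w<w'$, and $\phi(w)=\phi_\mu(w)$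 otherwise. Set $\hat T=\phi\circ\sigma\circ\phi^{-1}$ and $T_L=\kappa\circ\hat T\circ\iota:[0,1]\to[0,1]$. *)

From HB Require Import structures.
From mathcomp Require Import all_boot all_order.
From Stdlib Require Import Reals ClassicalEpsilon.

Set Implicit Arguments.
Unset Strict Implicit.
Unset Printing Implicit Defensive.

Section ShiftDefs.

Variables (d : Order.disp_t) (A : finOrderType d).

Definition word := nat -> A.

Definition shift (w : word) : word := fun n => w n.+1.

Definition is_open (U : word -> Prop) : Prop :=
  forall w, U w -> exists n : nat,
    forall w' : word, (forall i, (i < n)%N -> w' i = w i) -> U w'.

Definition is_closed (F : word -> Prop) : Prop := is_open (fun w => ~ F w).

Inductive borel : (word -> Prop) -> Prop :=
| borel_open U : is_open U -> borel U
| borel_compl U : borel U -> borel (fun w => ~ U w)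
| borel_cunion (F : nat -> word -> Prop) :
    (forall n, borel (F n)) -> borel (fun w => exists n, F n w).

Definition is_shift (L : word -> Prop) : Prop :=
  is_closed L /\ forall w, L w -> L (shift w).

Definition lex_lt (w w' : word) : Prop :=
  exists n : nat, (forall i, (i < n)%N -> w i = w' i) /\ (w n < w' n)%O.
Definition lex_le (w w' : word) : Prop := w = w' \/ lex_lt w w'.

Definition Cyl (L : word -> Prop) (v : seq A) (w : word) : Prop :=
  L w /\ mkseq w (size v) = v.

Local Open Scope R_scope.

(* Borel probability measure on L, modelled as a Borel probability measure on
   A^N concentrated on L (mu (A^N \ L) = 0). *)
Definition is_prob_measure_on (L : word -> Prop) (mu : (word -> Prop) -> R) : Prop :=
  (forall B, borel B -> 0 <= mu B) /\
  mu (fun _ => True) = 1 /\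
  mu (fun w => ~ L w) = 0 /\
  (forall F : nat -> word -> Prop,
     (forall n, borel (F n)) ->
     (forall m n w, F m w -> F n w -> m = n) ->
     infinite_sum (fun n => mu (F n)) (mu (fun w => exists n, F n w))).

Definition sigma_invariant (mu : (word -> Prop) -> R) : Prop :=
  forall B, borel B -> mu (fun w => B (shift w)) = mu B.

Definition nonatomic (mu : (word -> Prop) -> R) : Prop :=
  forall w : word, mu (fun u => u = w) = 0.

(* regularity (outer regular by open sets, inner regular by compact = closed
   sets, A^N being compact) *)
Definition regular (mu : (word -> Prop) -> R) : Prop :=
  forall B, borel B -> forall eps, 0 < eps ->
    (exists U, is_open U /\ (forall w, B w -> U w) /\ mu U <= mu B + eps) /\
    (exists K, is_closed K /\ (forall w, K w -> B w) /\ mu B - eps <= mu K).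

Definition positive_on_cylinders (L : word -> Prop) (mu : (word -> Prop) -> R) : Prop :=
  forall v : seq A, (exists w, Cyl L v w) -> 0 < mu (Cyl L v).

(* phi_mu(w) = mu([w_{L,min}, w]);  [w_{L,min}, w] = {u in L : u <= w}
   since w_{L,min} = min L *)
Definition phi_mu (L : word -> Prop) (mu : (word -> Prop) -> R) (w : word) : R :=
  mu (fun u => L u /\ lex_le u w).

(* hat I = [0,1] \sqcup Z_0^- is represented inside R * bool :
   (x, false) is x in [0,1] (= iota x), (z, true) is z^-.  kappa = fst. *)
Definition hatI := (R * bool)%type.
Definition iota (x : R) : hatI := (x, false).
Definition kappa (y : hatI) : R := fst y.

Definition is_lower (L : word -> Prop) (mu : (word -> Prop) -> R) (w : word) : Prop :=
  exists w', L w' /\ lex_lt w w' /\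
    (forall u, (L u /\ phi_mu L mu u = phi_mu L mu w) <-> (u = w \/ u = w')).

Definition phi (L : word -> Prop) (mu : (word -> Prop) -> R) (w : word) : hatI :=
  (phi_mu L mu w, if excluded_middle_informative (is_lower L mu w) then true else false).

(* T_L = kappa o (phi o sigma o phi^{-1}) o iota, with phi^{-1}(iota x) the
   word w of L with phi w = iota x (chosen by Hilbert's epsilon). *)
Definition T_L (L : word -> Prop) (mu : (word -> Prop) -> R) (x : R) : R :=
  epsilon (inhabits 0%R) (fun y => exists w, L w /\ phi L mu w = iota x /\
                                           kappa (phi L mu (shift w)) = y).

Definition I_La (L : word -> Prop) (mu : (word -> Prop) -> R) (a : A) (x : R) : Prop :=
  0 <= x < 1 /\ exists w, L w /\ phi L mu w = iota x /\ Cyl L [:: a] w.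

End ShiftDefs.

(* [phi_mu] is nondecreasing for the lexicographic order and, as [mu] charges
   every cylinder, strictly increasing except across a gap of [L], whose two
   endpoints get the same value.  The words that are not the lower end of such
   a gap are exactly the [phi]-preimages of [[0,1]], and [phi_mu] maps them
   bijectively onto [[0,1)]: the preimage of [x] is built digit by digit, and
   nonatomicity makes the digit brackets shrink to [x].  Writing [w_x] for this
   preimage, [I_{L,a}] is the interval [[mu(first letter < a), mu(first letter <= a))].
   If [x < y] lie in the same [I_{L,a}], the interval [(w_x, w_y]] sits in one
   first-letter cylinder, the shift maps it into [(sigma w_x, sigma w_y]] and
   sigma-invariance yields [T_L x < T_L y].  For right continuity, an upper
   word has positive mass to its right inside every cylinder around it, so
   [w_y] shares a long prefix with [w_x] when [y] is slightly right of [x];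
   then [sigma w_y] lies in a small cylinder around [sigma w_x], whose mass is
   small by nonatomicity. *)

From Pilot Require Import Defs.
From mathcomp Require Import all_boot all_order zify.
From Stdlib Require Import Reals Lra Classical.
From Stdlib Require Import FunctionalExtensionality PropExtensionality ClassicalEpsilon.
Import Order.TTheory.
Set Implicit Arguments.
Unset Strict Implicit.
Unset Printing Implicit Defensive.

Section Words.
Variables (d : Order.disp_t) (A : finOrderType d).
Implicit Types u v w z : word A.

Lemma ex_min_letter (P : A -> Prop) : (exists b, P b) ->
  exists b, P b /\ forall c, P c -> (b <= c)%O.
Proof.
case=> b0 Pb0.
pose p c := if excluded_middle_informative (P c) then true else false.
have pP c : reflect (P c) (p c) by rewrite /p; case: excluded_middle_informative; constructor.
have pb0 : p b0 by apply/pP.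
case: (arg_minP (fun c : A => c) pb0) => b /pP Pb Hb; exists b; split => // c /pP; exact: Hb.
Qed.

Lemma ex_max_letter (P : A -> Prop) : (exists b, P b) ->
  exists b, P b /\ forall c, P c -> (c <= b)%O.
Proof.
case=> b0 Pb0.
pose p c := if excluded_middle_informative (P c) then true else false.
have pP c : reflect (P c) (p c) by rewrite /p; case: excluded_middle_informative; constructor.
have pb0 : p b0 by apply/pP.
case: (arg_maxP (fun c : A => c) pb0) => b /pP Pb Hb; exists b; split => // c /pP; exact: Hb.
Qed.

Definition agree n u v := forall i, (i < n)%N -> u i = v i.

Lemma agree_refl n u : agree n u u. Proof. by []. Qed.

Lemma agree_sym n u v : agree n u v -> agree n v u.
Proof. by move=> H i Hi; rewrite H. Qed.

Lemma agree_trans n u v w : agree n u v -> agree n v w -> agree n u w.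
Proof. by move=> H1 H2 i Hi; rewrite H1 // H2. Qed.

Lemma agree_leq m n u v : (m <= n)%N -> agree n u v -> agree m u v.
Proof. by move=> Hmn H i Hi; apply: H; lia. Qed.

Lemma agreeS n u v : agree n.+1 u v <-> agree n u v /\ u n = v n.
Proof.
split => [H|[H1 H2] i Hi]; first by split; [apply: agree_leq H | apply: H].
by case: (ltngtP i n) => Hin; [exact: H1 | lia | rewrite Hin].
Qed.

Lemma agree_shift n u v : agree n.+1 u v -> agree n (shift u) (shift v).
Proof. by move=> H i Hi; apply: H. Qed.

Lemma eq_agree u v : (forall n, agree n u v) -> u = v.
Proof. by move=> H; apply: functional_extensionality => i; apply: (H i.+1). Qed.

Lemma mkseq_agree n u v : mkseq u n = mkseq v n <-> agree n u v.
Proof.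
split => [E i Hi | H].
- by have := congr1 (fun s => nth (u 0) s i) E; rewrite !nth_mkseq.
- by apply/eq_in_map => i; rewrite mem_iota => /andP [_ Hi]; apply: H.
Qed.

Lemma lex_irrefl u : ~ lex_lt u u.
Proof. by case=> n [_]; rewrite ltxx. Qed.

Lemma lex_trans u v w : lex_lt u v -> lex_lt v w -> lex_lt u w.
Proof.
case=> j [Hj1 Hj2] [k [Hk1 Hk2]].
case: (ltngtP j k) => Hjk.
- by exists j; split; [move=> i Hi; rewrite Hj1 ?Hk1 //; lia | rewrite -(Hk1 j Hjk)].
- by exists k; split; [move=> i Hi; rewrite Hj1 ?Hk1 //; lia | rewrite (Hj1 k Hjk)].
- subst k; exists j; split; [by move=> i Hi; rewrite Hj1 ?Hk1 | exact: lt_trans Hj2 Hk2].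
Qed.

Lemma lex_total u v : u <> v -> lex_lt u v \/ lex_lt v u.
Proof.
move=> Huv.
have Hex : exists i, u i != v i.
  apply: NNPP => H; apply: Huv; apply: functional_extensionality => i.
  by apply: NNPP => Hi; apply: H; exists i; apply/eqP.
case: (ex_minnP Hex) => j Hj Hmin.
have Hag : agree j u v.
  by move=> i Hi; apply/eqP; apply: contraTT Hi => /Hmin; rewrite -leqNgt.
case/orP: (lt_total Hj) => H; [left | right]; exists j; split => //.
exact: agree_sym.
Qed.

Lemma lex_le_trans u v w : lex_le u v -> lex_le v w -> lex_le u w.
Proof. by case=> [->|H1] // [<-|H2]; right => //; exact: lex_trans H1 H2. Qed.

Lemma lex_lt_nle u v : lex_lt u v -> ~ lex_le v u.
Proof.
move=> H [E|H']; first by subst; exact: lex_irrefl H.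
exact: lex_irrefl (lex_trans H H').
Qed.

Lemma lex_leVgt u v : lex_le u v \/ lex_lt v u.
Proof.
case: (classic (u = v)) => [E|/lex_total [H|H]]; [by left; left | by left; right | by right].
Qed.

Lemma lex_le_antisym u v : lex_le u v -> lex_le v u -> u = v.
Proof. by move=> [//|H] /(lex_lt_nle H). Qed.

Lemma agree_lex_between n u v w :
  agree n u w -> lex_le u v -> lex_le v w -> agree n u v.
Proof.
move=> Huw [<-//|[j [Hj1 Hj2]]] Hvw.
case: (leqP n j) => Hnj; first exact: agree_leq Hnj Hj1.
exfalso; case: Hvw => [E|[k [Hk1 Hk2]]].
- by subst w; move: Hj2; rewrite (Huw j Hnj) ltxx.
- case: (ltngtP k j) => Hkj.
  + by move: Hk2; rewrite -(Hj1 k Hkj) (Huw k (ltn_trans Hkj Hnj)) ltxx.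
  + by move: Hj2; rewrite (Hk1 j Hkj) -(Huw j Hnj) ltxx.
  + by subst k; have := lt_trans Hj2 Hk2; rewrite (Huw j Hnj) ltxx.
Qed.

Lemma lex_lt_prefix n p q p' q' : lex_lt p q -> ~ agree n p q ->
  agree n p p' -> agree n q q' -> lex_lt p' q' /\ ~ agree n p' q'.
Proof.
move=> [j [Hj1 Hj2]] Hna Hp Hq.
have Hjn : (j < n)%N.
  by case: (leqP n j) => // Hnj; exfalso; apply: Hna; exact: agree_leq Hnj Hj1.
split.
- by exists j; split; [move=> i Hi; rewrite -Hp ?Hj1 ?Hq //; lia | rewrite -Hp // -Hq].
- by move/(_ j Hjn); rewrite -Hp // -Hq // => E; move: Hj2; rewrite E ltxx.
Qed.

Lemma lex_lt_nagree u v : lex_lt u v -> exists j, forall m, (j < m)%N -> ~ agree m u v.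
Proof. by case=> j [_ Hj]; exists j => m Hm /(_ j Hm) E; move: Hj; rewrite E ltxx. Qed.

Lemma lex_lt_head u v : (u 0 < v 0)%O -> lex_lt u v.
Proof. by exists 0. Qed.

Lemma lex_le_head u v : lex_le u v -> (u 0 <= v 0)%O.
Proof. by case=> [<-//|[[|j] [Hj1 Hj2]]]; [exact: ltW | rewrite Hj1]. Qed.

Lemma lex_lt_shift u v : u 0 = v 0 -> lex_lt u v -> lex_lt (shift u) (shift v).
Proof.
move=> E [[|j] [Hj1 Hj2]]; first by move: Hj2; rewrite E ltxx.
by exists j; split => // i Hi; apply: Hj1.
Qed.

Lemma lex_le_shift u v : u 0 = v 0 -> lex_le u v -> lex_le (shift u) (shift v).
Proof. by move=> E [<-|H]; [left | right; exact: lex_lt_shift]. Qed.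

End Words.

Section CantorTopology.
Variables (d : Order.disp_t) (A : finOrderType d).
Implicit Types u v w z : word A.
Implicit Types S : word A -> Prop.

Definition prefix_determined n S := forall u v, agree n u v -> S u -> S v.

Lemma prefix_determined_open n S : prefix_determined n S -> is_open S.
Proof. by move=> H w Sw; exists n => w' Hw'; apply: (H w) => //; exact: agree_sym. Qed.

Lemma prefix_determined_closed n S : prefix_determined n S -> is_closed S.
Proof.
move=> H; apply: (@prefix_determined_open n) => u v Huv Nu Sv.
by apply: Nu; apply: (H v) => //; exact: agree_sym.
Qed.

Lemma closedI S1 S2 : is_closed S1 -> is_closed S2 -> is_closed (fun w => S1 w /\ S2 w).
Proof.
move=> H1 H2 w Hw; case: (classic (S1 w)) => Hs1.
- have Hs2 : ~ S2 w by move=> Hs2; apply: Hw.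
  by case: (H2 w Hs2) => n Hn; exists n => w' Hw' [_ HS]; exact: Hn Hw' HS.
- by case: (H1 w Hs1) => n Hn; exists n => w' Hw' [HS _]; exact: Hn Hw' HS.
Qed.

Lemma open_lex_gt w : is_open (fun v => lex_lt w v).
Proof.
move=> v [j [Hj1 Hj2]]; exists j.+1 => v' Hv'; exists j; split; last by rewrite Hv'.
by move=> i Hi; rewrite Hj1 // Hv' //; lia.
Qed.

Lemma closed_lex_le w : is_closed (fun v => lex_le v w).
Proof.
move=> v Hv; have Hwv : lex_lt w v by case: (lex_leVgt v w).
by case: (open_lex_gt Hwv) => n Hn; exists n => v' Hv'; exact: lex_lt_nle (Hn v' Hv').
Qed.

Lemma closed_eq w : is_closed (fun v => v = w).
Proof.
move=> v Hv; have [i Hi] : exists i, v i <> w i.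
  by apply: NNPP => H; apply/Hv/eq_agree => n i _; apply: NNPP => Hi; apply: H; exists i.
by exists i.+1 => v' Hv' E; subst v'; apply: Hi; rewrite Hv'.
Qed.

Lemma greedy_word (Q : word A -> nat -> Prop) u0 : Q u0 0 ->
  (forall u n, Q u n -> exists u', agree n u u' /\ Q u' n.+1) ->
  (forall u u' n, agree n u u' -> Q u n -> Q u' n) ->
  exists w, forall n, Q w n.
Proof.
move=> H0 Hstep Hresp.
have Hs n u : {u' | Q u n -> agree n u u' /\ Q u' n.+1}.
  apply: constructive_indefinite_description.
  case: (classic (Q u n)) => [/Hstep [u' Hu']|Hq]; [by exists u' | by exists u].
pose s := fix s n := if n is k.+1 then proj1_sig (Hs k (s k)) else u0.
have HQ n : Q (s n) n.
  by elim: n => [//|n IH] /=; exact: (proj2 (proj2_sig (Hs n (s n)) IH)).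
have Hs1 n : agree n (s n) (s n.+1).
  exact: (proj1 (proj2_sig (Hs n (s n)) (HQ n))).
have Hag n k : agree n (s n) (s (n + k)).
  elim: k => [|k IH]; first by rewrite addn0.
  by apply: agree_trans IH _; rewrite addnS; apply: agree_leq (Hs1 _); lia.
exists (fun i => s i.+1 i) => n; apply: (Hresp (s n)) => // i Hi.
by have := Hag i.+1 (n - i.+1); rewrite subnKC // => /(_ i (ltnSn i)) ->.
Qed.

Lemma ex_lex_min (C : word A -> Prop) : is_closed C -> (exists c, C c) ->
  exists m, C m /\ forall c, C c -> lex_le m c.
Proof.
move=> HC [c0 Hc0].
pose Q u n := (exists c, C c /\ agree n c u) /\
   forall j, (j < n)%N -> forall c, C c -> agree j c u -> (u j <= c j)%O.
case: (@greedy_word Q c0).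
- by split => [|j]; [exists c0 | lia].
- move=> u n [[c [Cc Hc]] Hmin].
  case: (@ex_min_letter _ A (fun b => exists c, C c /\ agree n c u /\ c n = b)).
    by exists (c n); exists c.
  move=> b [[c' [Cc' [Hc' Ec']]] Hb].
  exists c'; split; first exact: agree_sym.
  split; first by exists c'.
  move=> j Hj c1 Cc1 Hc1; case: (ltngtP j n) => Hjn; [|lia|].
  + rewrite (Hc' j Hjn); apply: Hmin => // i Hi; rewrite Hc1 // Hc' //; lia.
  + subst j; rewrite Ec'; apply: Hb; exists c1; do 2!split => //.
    by move=> i Hi; rewrite Hc1 // Hc'.
- move=> u u' n Hag [[c [Cc Hc]] Hmin]; split.
  + by exists c; split => //; exact: agree_trans Hc Hag.
  + move=> j Hj c1 Cc1 Hc1; rewrite -(Hag j Hj); apply: Hmin => //.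
    by apply: agree_trans Hc1 _; apply: agree_sym; apply: agree_leq Hag; lia.
- move=> w Hw; exists w; split.
  + apply: NNPP => Nw; case: (HC w Nw) => n Hn.
    by case: (proj1 (Hw n)) => c [Cc Hc]; apply: (Hn c) => //; exact: agree_sym.
  + move=> c Cc; case: (lex_leVgt w c) => // [[j [Hj1 Hj2]]].
    by have := proj2 (Hw j.+1) j (ltnSn j) c Cc Hj1; rewrite leNgt Hj2.
Qed.

End CantorTopology.

Section BorelSets.
Variables (d : Order.disp_t) (A : finOrderType d).
Implicit Types B S : word A -> Prop.

Lemma pred_ext B1 B2 : (forall w, B1 w <-> B2 w) -> B1 = B2.
Proof.
by move=> H; apply: functional_extensionality => w; apply: propositional_extensionality.
Qed.

Lemma borel_ext B1 B2 : borel B1 -> (forall w, B1 w <-> B2 w) -> borel B2.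
Proof. by move=> H /pred_ext <-. Qed.

Lemma borel_closed B : is_closed B -> borel B.
Proof.
move=> H; apply: (@borel_ext (fun w => ~ ~ B w)); first exact/borel_compl/borel_open.
by move=> w; split; [exact: NNPP | tauto].
Qed.

Lemma borel_prefix n B : prefix_determined n B -> borel B.
Proof. by move/prefix_determined_open; exact: borel_open. Qed.

Lemma borelT : borel (fun _ : word A => True).
Proof. by apply: (@borel_prefix 0). Qed.

Lemma borel0 : borel (fun _ : word A => False).
Proof. by apply: (@borel_prefix 0). Qed.

Lemma borelU B1 B2 : borel B1 -> borel B2 -> borel (fun w => B1 w \/ B2 w).
Proof.
move=> H1 H2.
apply: (@borel_ext (fun w => exists n, (if n is 0 then B1 else B2) w)).
  by apply: borel_cunion; case.
by move=> w; split => [[[|n] H]|[H|H]]; [left | right | exists 0 | exists 1].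
Qed.

Lemma borelI B1 B2 : borel B1 -> borel B2 -> borel (fun w => B1 w /\ B2 w).
Proof.
move=> H1 H2; apply: (@borel_ext (fun w => ~ (~ B1 w \/ ~ B2 w))); last by move=> w; tauto.
by apply/borel_compl/borelU; exact: borel_compl.
Qed.

Lemma borel_bigcap (D : nat -> word A -> Prop) :
  (forall n, borel (D n)) -> borel (fun w => forall n, D n w).
Proof.
move=> H; apply: (@borel_ext (fun w => ~ exists n, ~ D n w)).
  by apply/borel_compl/borel_cunion => n; exact: borel_compl.
move=> w; split => [Hn n | Hn [n]]; last exact.
by apply: NNPP => Hd; apply: Hn; exists n.
Qed.

Lemma borel_shift B : borel B -> borel (fun w => B (shift w)).
Proof.
elim=> [U HU|U _|F _]; [|exact: borel_compl|exact: borel_cunion].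
apply: borel_open => w /HU [n Hn]; exists n.+1 => w' Hw'.
by apply: Hn => i Hi; apply: Hw'.
Qed.

Lemma decreasing_leq (D : nat -> word A -> Prop) : (forall n w, D n.+1 w -> D n w) ->
  forall m n w, (n <= m)%N -> D m w -> D n w.
Proof.
move=> Hdec; elim=> [|m IH] n w Hnm Hm; first by have -> : n = 0 by lia.
by case: (ltngtP n m.+1) => [Hn||->] //; [apply: IH (Hdec _ _ Hm); lia | lia].
Qed.

Lemma decreasing_exit (D : nat -> word A -> Prop) w : (forall n w, D n.+1 w -> D n w) ->
  D 0 w -> ~ (forall n, D n w) -> exists k, D k w /\ ~ D k.+1 w.
Proof.
move=> Hdec H0 Hall; have [n Hn] : exists n, ~ D n w.
  by apply: NNPP => H; apply: Hall => n; apply: NNPP => Hn; apply: H; exists n.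
elim: n Hn => [//|n IH] Hn; case: (classic (D n w)) => [Dn|]; [by exists n | exact: IH].
Qed.

End BorelSets.

Local Open Scope R_scope.

Section ProbabilityMeasure.
Variables (d : Order.disp_t) (A : finOrderType d).
Variables (L : word A -> Prop) (mu : (word A -> Prop) -> R).
Hypothesis Hmu : is_prob_measure_on L mu.
Implicit Types B S : word A -> Prop.

Lemma mu_ext B1 B2 : (forall w, B1 w <-> B2 w) -> mu B1 = mu B2.
Proof. by move/pred_ext ->. Qed.

Lemma mu_ge0 B : borel B -> 0 <= mu B.
Proof. by case: Hmu => H _; exact: H. Qed.

Lemma mu_setT : mu (fun _ => True) = 1.
Proof. by case: Hmu => _ []. Qed.

Lemma mu_set0 : mu (fun _ => False) = 0.
Proof.
case: Hmu => _ [_ [_ Hadd]].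
have := Hadd (fun _ _ => False) (fun _ => borel0 _) (fun m n w (f : False) => match f with end).
rewrite (@mu_ext _ (fun _ => False)); last by move=> w; split => [[]|].
set c := mu _ => Hs; apply: NNPP => Hc.
have Hc' := Rabs_pos_lt _ Hc; have [N HN] := Hs _ Hc'.
have := HN N.+1 (le_S _ _ (le_n N)); rewrite sum_cte /Rdist.
have -> : c * INR N.+2 - c = c * INR N.+1 by rewrite [INR N.+2]S_INR; ring.
rewrite Rabs_mult (Rabs_pos_eq (INR _)); last exact: pos_INR.
have : 1 <= INR N.+1 by rewrite S_INR; have := pos_INR N; lra.
nra.
Qed.

(* Countable additivity for the family [B1, B2, empty, empty, ...]. *)
Lemma mu_split B1 B2 S : borel B1 -> borel B2 -> (forall w, B1 w -> B2 w -> False) ->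
  (forall w, S w <-> B1 w \/ B2 w) -> mu S = mu B1 + mu B2.
Proof.
move=> H1 H2 Hd HS; case: Hmu => _ [_ [_ Hadd]].
pose F n := match n with O => B1 | 1%nat => B2 | _ => fun _ => False end.
have HF n : borel (F n) by case: n => [|[|n]] //=; exact: borel0.
have HFd m n w : F m w -> F n w -> m = n.
  by case: m n => [|[|m]] [|[|n]] //= Ha Hb; exfalso; [exact: Hd Ha Hb | exact: Hd Hb Ha].
have := Hadd F HF HFd.
rewrite (@mu_ext _ S); last first.
  by move=> w; rewrite HS; split => [[[|[|n]]] //= H|[H|H]]; [left|right|exists O|exists 1%nat].
move=> Hs; apply: (uniqueness_sum _ _ _ Hs) => eps Heps; exists 1%nat => n Hn.
have Hsum k : sum_f_R0 (fun n => mu (F n)) k.+1 = mu B1 + mu B2.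
  by elim: k => [//|k IH]; rewrite /= in IH *; rewrite IH mu_set0; ring.
case: n Hn => [|n] Hn; first lia.
by rewrite Hsum /Rdist Rminus_diag Rabs_R0.
Qed.

Lemma mu_le B1 B2 : borel B1 -> borel B2 -> (forall w, B1 w -> B2 w) -> mu B1 <= mu B2.
Proof.
move=> H1 H2 Hs; have HD := borelI H2 (borel_compl H1).
rewrite (@mu_split B1 (fun w => B2 w /\ ~ B1 w) B2) //.
- by have := mu_ge0 HD; lra.
- by move=> w ? [].
- by move=> w; have := Hs w; have := classic (B1 w); tauto.
Qed.

Lemma mu_le1 B : borel B -> mu B <= 1.
Proof. by move=> H; rewrite -mu_setT; apply: mu_le => //; exact: borelT. Qed.

Lemma mu_add_le B1 B2 S : borel B1 -> borel B2 -> borel S ->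
  (forall w, B1 w -> B2 w -> False) ->
  (forall w, B1 w -> S w) -> (forall w, B2 w -> S w) -> mu B1 + mu B2 <= mu S.
Proof.
move=> H1 H2 HS Hd Hs1 Hs2; rewrite -(@mu_split B1 B2 (fun w => B1 w \/ B2 w)) //.
by apply: mu_le => //; [exact: borelU | move=> w [/Hs1|/Hs2]].
Qed.

Lemma mu_le_add B1 B2 S : borel B1 -> borel B2 -> borel S ->
  (forall w, B1 w -> B2 w -> False) ->
  (forall w, S w -> B1 w \/ B2 w) -> mu S <= mu B1 + mu B2.
Proof.
move=> H1 H2 HS Hd Hs; rewrite -(@mu_split B1 B2 (fun w => B1 w \/ B2 w)) //.
by apply: mu_le => //; exact: borelU.
Qed.

Lemma mu_gt0_nonempty B : 0 < mu B -> exists w, B w.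
Proof.
move=> Hp; apply: NNPP => Hn.
rewrite (@mu_ext B (fun _ => False)) ?mu_set0 in Hp; first lra.
by move=> w; split => // Hw; apply: Hn; exists w.
Qed.

(* Countable additivity on the disjoint family [bigcap D, D 0 \ D 1, D 1 \ D 2, ...],
   whose union is [D 0]. *)
Lemma mu_cont_from_above (D : nat -> word A -> Prop) : (forall n, borel (D n)) ->
  (forall n w, D n.+1 w -> D n w) ->
  forall eps, 0 < eps -> exists n, mu (D n) < mu (fun w => forall n, D n w) + eps.
Proof.
move=> HD Hdec eps Heps.
pose G n := if n is k.+1 then fun w => D k w /\ ~ D k.+1 w else fun w => forall n, D n w.
have HG n : borel (G n).
  by case: n => [|k] /=; [exact: borel_bigcap | apply: borelI => //; exact: borel_compl].
have HGd m n w : G m w -> G n w -> m = n.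
  case: m n => [|m] [|n] //=.
  - by move=> H [_ []]; apply: H.
  - by move=> [_ HN] H; exfalso; apply: HN; apply: H.
  move=> [Hm Hm'] [Hn Hn']; case: (ltngtP m n) => [Hmn|Hmn|->] //; exfalso.
  - by apply: Hm'; apply: (decreasing_leq Hdec) Hn.
  - by apply: Hn'; apply: (decreasing_leq Hdec) Hm.
case: Hmu => _ [_ [_ Hadd]]; have := Hadd G HG HGd.
rewrite (@mu_ext _ (D O)); last first.
  move=> w; split => [[[|n]] /= H|H0]; first exact: H.
    by apply: (decreasing_leq Hdec) (proj1 H).
  case: (classic (forall n, D n w)) => [HI|HI]; first by exists O.
  by have [k Hk] := decreasing_exit Hdec H0 HI; exists k.+1.
have Hpart n : sum_f_R0 (fun n => mu (G n)) n = mu (G O) + mu (D O) - mu (D n).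
  elim: n => [/=|n IH]; first ring.
  rewrite /= IH (@mu_split (D n.+1) (G n.+1) (D n) (HD _) (HG _)) /=; first ring.
  - by move=> w ? [].
  - by move=> w; split => [H|[/Hdec|[]]] //; case: (classic (D n.+1 w)); tauto.
move=> Hs; have [N HN] := Hs eps Heps; exists N.
by have := HN N (le_n N); rewrite Hpart /Rdist => /Rabs_def2 /=; lra.
Qed.

Lemma ex_letter_bracket n (C : word A -> Prop) y : borel C -> 0 <= y < mu C ->
  exists b, mu (fun v => C v /\ (v n < b)%O) <= y < mu (fun v => C v /\ (v n <= b)%O).
Proof.
move=> HC [Hy0 HyC].
have [c0 _] := mu_gt0_nonempty (Rle_lt_trans _ _ _ Hy0 HyC).
have [m0 [_ Hm0]] := @ex_min_letter _ A (fun _ => True) (ex_intro _ (c0 n) I).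
have Pm0 : mu (fun v => C v /\ (v n < m0)%O) <= y.
  rewrite (@mu_ext _ (fun _ => False)) ?mu_set0 // => v.
  by split => // [[_]]; rewrite ltNge Hm0.
have [b [Pb Hb]] :=
  @ex_max_letter _ A (fun b => mu (fun v => C v /\ (v n < b)%O) <= y) (ex_intro _ m0 Pm0).
exists b; split => //.
case: (classic (exists c, (b < c)%O)) => [Hc|Hc].
- have [c [Hbc Hcmin]] := @ex_min_letter _ A (fun c => (b < c)%O) Hc.
  rewrite (@mu_ext _ (fun v => C v /\ (v n < c)%O)); last first.
    move=> v; split=> [[Cv Hv]|[Cv Hv]]; split=> //; first exact: le_lt_trans Hv Hbc.
    by rewrite leNgt; apply/negP => /Hcmin; rewrite leNgt Hv.
  apply: Rnot_le_lt => /Hb; by rewrite leNgt Hbc.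
- rewrite (@mu_ext _ C) // => v; split=> [[]//|Cv]; split=> //.
  by rewrite leNgt; apply/negP => H; apply: Hc; exists (v n).
Qed.

End ProbabilityMeasure.

Section ShiftMeasure.
Variables (d : Order.disp_t) (A : finOrderType d).
Variables (L : word A -> Prop) (mu : (word A -> Prop) -> R).
Hypotheses (HL : is_shift L) (Hmu : is_prob_measure_on L mu).
Hypotheses (Hinv : sigma_invariant mu) (Hnat : nonatomic mu).
Hypothesis Hpos : positive_on_cylinders L mu.
Implicit Types u v w z : word A.

Notation phim := (phi_mu L mu).

Lemma L_closed : is_closed L. Proof. by case: HL. Qed.

Lemma L_shift w : L w -> L (shift w). Proof. by case: HL => _; apply. Qed.

Lemma borel_L : borel L. Proof. exact: borel_closed L_closed. Qed.

Lemma borel_L_prefix n S : prefix_determined n S -> borel (fun v => L v /\ S v).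
Proof. by move=> H; apply: borelI; [exact: borel_L | exact: borel_prefix H]. Qed.

Lemma borel_L_le w : borel (fun v => L v /\ lex_le v w).
Proof. by apply: borelI; [exact: borel_L | exact/borel_closed/closed_lex_le]. Qed.

Lemma borel_L_gt w : borel (fun v => L v /\ lex_lt w v).
Proof. by apply: borelI; [exact: borel_L | exact/borel_open/open_lex_gt]. Qed.

Lemma borel_L_oc u w : borel (fun v => L v /\ lex_lt u v /\ lex_le v w).
Proof.
apply: borelI; first exact: borel_L.
by apply: borelI; [exact/borel_open/open_lex_gt | exact/borel_closed/closed_lex_le].
Qed.

Lemma mu_L : mu L = 1.
Proof.
case: Hmu => _ [_ [HnL _]].
rewrite -(mu_setT Hmu) (mu_split Hmu (B1 := L) (B2 := fun v => ~ L v) (S := fun _ => True)) ?HnL.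
- ring.
- exact: borel_L.
- exact/borel_compl/borel_L.
- by move=> v.
- by move=> v; split => // _; exact: classic.
Qed.

Lemma phi_muD u w : lex_le u w ->
  phim w = phim u + mu (fun v => L v /\ lex_lt u v /\ lex_le v w).
Proof.
move=> Huw; apply: (mu_split Hmu (borel_L_le u) (borel_L_oc u w)).
- by move=> v [_ H1] [_ [H2 _]]; exact: lex_lt_nle H2 H1.
- move=> v; split.
  + by move=> [Lv Hv]; case: (lex_leVgt v u) => H; [left | right].
  + by case=> [[Lv Hv]|[Lv [_ Hv]]]; split => //; exact: lex_le_trans Hv Huw.
Qed.

Lemma phi_mu_mono u w : lex_le u w -> phim u <= phim w.
Proof. by move=> H; rewrite (phi_muD H); have := mu_ge0 Hmu (borel_L_oc u w); lra. Qed.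

Lemma lex_lt_of_phi_mu_lt u w : phim u < phim w -> lex_lt u w.
Proof. by move=> H; case: (lex_leVgt w u) => // /phi_mu_mono; lra. Qed.

Definition cyl n u := fun v => L v /\ agree n v u.

Lemma borel_cyl n u : borel (cyl n u).
Proof. by apply: (@borel_L_prefix n) => v v' Hv H; apply: agree_trans (agree_sym Hv) H. Qed.

Lemma cyl_gt0 n u : L u -> 0 < mu (cyl n u).
Proof.
move=> Lu; rewrite (@mu_ext _ _ mu _ (Cyl L (mkseq u n))); last first.
  by move=> v; rewrite /Cyl size_mkseq mkseq_agree.
by apply: Hpos; exists u; rewrite /Cyl size_mkseq.
Qed.

Lemma cyl_mu_small u : forall eps, 0 < eps -> exists n, mu (cyl n u) < eps.
Proof.
move=> eps Heps.
have Hdec n v : cyl n.+1 u v -> cyl n u v.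
  by move=> [Lv Hv]; split => //; apply: agree_leq Hv.
have [n Hn] := mu_cont_from_above Hmu (borel_cyl ^~ u) Hdec Heps; exists n.
have : mu (fun v => forall n, cyl n u v) <= 0.
  rewrite -(Hnat u).
  apply: (mu_le Hmu (borel_bigcap (borel_cyl ^~ u)) (borel_closed (@closed_eq _ _ u))).
  by move=> v H; apply: eq_agree => k; case: (H k).
lra.
Qed.

(* A cylinder around [v] deep enough to separate it from [u] and [z] has positive mass. *)
Lemma phi_mu_lt_across u v z : L v -> lex_lt u v -> lex_lt v z -> phim u < phim z.
Proof.
move=> Lv Huv Hvz.
have [j1 Hj1] := lex_lt_nagree Huv; have [j2 Hj2] := lex_lt_nagree Hvz.
set n := (maxn j1 j2).+1.
have Hsub v' : cyl n v v' -> L v' /\ lex_lt u v' /\ lex_le v' z.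
  move=> [Lv' Ha]; do 2!split => //.
  - by case: (lex_lt_prefix Huv (Hj1 n _) (@agree_refl _ _ n u) (agree_sym Ha)) => //; lia.
  - by right; case: (lex_lt_prefix Hvz (Hj2 n _) (agree_sym Ha) (@agree_refl _ _ n z)) => //; lia.
rewrite (phi_muD (or_intror (lex_trans Huv Hvz))).
have := mu_le Hmu (borel_cyl n v) (borel_L_oc u z) Hsub.
by have := cyl_gt0 n Lv; lra.
Qed.

(* [upper w] says that [phi w] lies in [[0,1]], not in the copy [Z_0^-] (see [phi_iota]). *)
Definition upper w := L w /\ forall v, L v -> lex_lt w v -> phim w < phim v.

Lemma upper_not_lower w : L w -> upper w <-> ~ is_lower L mu w.
Proof.
move=> Lw; split.
- move=> [_ Hup] [w' [Lw' [Hlt Hf]]].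
  by have [_ E] := proj2 (Hf w') (or_intror erefl); have := Hup w' Lw' Hlt; lra.
- move=> Hnl; split => // v Lv Hwv; apply: NNPP => Hn.
  have Ev : phim v = phim w by have := phi_mu_mono (or_intror Hwv); lra.
  apply: Hnl; exists v; do 2!split => //; move=> u; split; last by case=> ->.
  move=> [Lu Eu]; apply: NNPP => Hu.
  have [Huw Huv] : u <> w /\ u <> v by tauto.
  case: (lex_total Huw) => H1; first by have := phi_mu_lt_across Lw H1 Hwv; lra.
  case: (lex_total Huv) => H2; first by have := phi_mu_lt_across Lu H1 H2; lra.
  by have := phi_mu_lt_across Lv Hwv H2; lra.
Qed.

Lemma phi_iota w x : L w -> phi L mu w = Defs.iota x <-> phim w = x /\ upper w.
Proof.
move=> Lw; rewrite (upper_not_lower Lw) /phi /Defs.iota.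
by case: excluded_middle_informative => Hl; split => [[]|[]] // ->.
Qed.

Lemma upper_inj w w' : upper w -> upper w' -> phim w = phim w' -> w = w'.
Proof.
move=> [Lw Hw] [Lw' Hw'] E; apply: NNPP => /lex_total [H|H].
- by have := Hw w' Lw' H; lra.
- by have := Hw' w Lw H; lra.
Qed.

Definition lex_below n u := fun v => L v /\ lex_lt v u /\ ~ agree n v u.

Lemma borel_lex_below n u : borel (lex_below n u).
Proof.
apply: (@borel_L_prefix n) => v v' Hv [Hlt Hna].
by have [] := lex_lt_prefix Hlt Hna Hv (@agree_refl _ _ n u).
Qed.

Lemma lex_below_agree n u u' : agree n u u' -> lex_below n u = lex_below n u'.
Proof.
move=> Ha; apply: pred_ext => v; split => [] [Lv [Hlt Hna]]; split => //.
- by have [] := lex_lt_prefix Hlt Hna (@agree_refl _ _ n v) Ha.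
- by have [] := lex_lt_prefix Hlt Hna (@agree_refl _ _ n v) (agree_sym Ha).
Qed.

Lemma cyl_agree n u u' : agree n u u' -> cyl n u = cyl n u'.
Proof.
move=> Ha; apply: pred_ext => v; split => [] [Lv Hv]; split => //.
- exact: agree_trans Hv Ha.
- exact: agree_trans Hv (agree_sym Ha).
Qed.

Lemma lex_belowS n u v :
  lex_below n.+1 u v <-> lex_below n u v \/ (cyl n u v /\ (v n < u n)%O).
Proof.
split.
- move=> [Lv [Hlt Hna]]; case: (classic (agree n v u)) => Ha; last by left.
  right; split; first by split.
  case: Hlt => j [Hj1 Hj2].
  case: (ltngtP j n) => [Hjn|Hjn|<-] //.
  + by move: Hj2; rewrite (Ha j Hjn) ltxx.
  + by exfalso; apply: Hna; apply: agree_leq Hj1.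
- case=> [[Lv [Hlt Hna]]|[[Lv Ha] Hlt]]; split => //; split => //.
  + by move/agreeS => [].
  + by exists n.
  + by move/agreeS => [_ E]; move: Hlt; rewrite E ltxx.
Qed.

Lemma cylS n u v : cyl n.+1 u v <-> cyl n u v /\ v n = u n.
Proof. by rewrite /cyl agreeS; split => [[? []]|[[]]]. Qed.

Definition digit_bracket x u n :=
  mu (lex_below n u) <= x < mu (lex_below n u) + mu (cyl n u).

Lemma digit_bracketS x u n : digit_bracket x u n ->
  exists u', agree n u u' /\ digit_bracket x u' n.+1.
Proof.
move=> [Hlo Hhi].
have Hy : 0 <= x - mu (lex_below n u) < mu (cyl n u) by lra.
have [b [Hb1 Hb2]] := ex_letter_bracket Hmu n (borel_cyl n u) Hy.
pose u' i := if (i < n)%nat then u i else b.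
have Hu' : agree n u u' by move=> i Hi; rewrite /u' Hi.
have Eu'n : u' n = b by rewrite /u' ltnn.
have HCP u0 (P : A -> Prop) : borel (fun v => cyl n u0 v /\ P (v n)).
  apply: borelI; first exact: borel_cyl.
  by apply: (@borel_prefix _ _ n.+1) => v v' Hv; rewrite (Hv n).
have E1 : mu (lex_below n.+1 u') =
    mu (lex_below n u) + mu (fun v => cyl n u v /\ (v n < b)%O).
  rewrite (lex_below_agree Hu') (cyl_agree Hu') -Eu'n.
  apply: (mu_split Hmu (borel_lex_below n u') (HCP u' (fun c => (c < u' n)%O)) _ (lex_belowS n u')).
  by move=> v [_ [_ Hna]] [[_ Ha] _].
have E2 : mu (cyl n.+1 u') = mu (fun v => cyl n u v /\ v n = b).
  by rewrite (cyl_agree Hu') -Eu'n; apply: mu_ext => v; exact: cylS.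
have E3 : mu (fun v => cyl n u v /\ (v n <= b)%O) =
    mu (fun v => cyl n u v /\ (v n < b)%O) + mu (fun v => cyl n u v /\ v n = b).
  apply: (mu_split Hmu (HCP u (fun c => (c < b)%O)) (HCP u (fun c => c = b))).
  - by move=> v [_ H1] [_ H2]; move: H1; rewrite H2 ltxx.
  - move=> v; rewrite le_eqVlt; split => [[Hc /orP [/eqP|]]|[[Hc H]|[Hc ->]]]; try tauto.
    + by rewrite H orbT.
    + by rewrite eqxx.
by exists u'; split => //; rewrite /digit_bracket E1 E2; lra.
Qed.

Lemma phi_mu_bracket n w :
  mu (lex_below n w) <= phim w <= mu (lex_below n w) + mu (cyl n w).
Proof.
split.
- apply: (mu_le Hmu (borel_lex_below n w) (borel_L_le w)).
  by move=> v [Lv [Hlt _]]; split => //; right.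
- apply: (mu_le_add Hmu (borel_lex_below n w) (borel_cyl n w) (borel_L_le w)).
  + by move=> v [_ [_ H1]] [_ H2].
  + move=> v [Lv Hle]; case: (classic (agree n v w)) => Ha; [right | left] => //.
    split => //; split => //; case: Hle => // E; subst v.
    by exfalso; apply: Ha.
Qed.

(* The digits of the preimage are chosen greedily; nonatomicity makes the
   brackets [digit_bracket x w n] shrink to [x]. *)
Lemma phi_mu_surj x : 0 <= x < 1 -> exists w, L w /\ phim w = x.
Proof.
move=> Hx.
have [w0 _] : exists w, L w by apply: (mu_gt0_nonempty Hmu); rewrite mu_L; lra.
have Hbr0 : digit_bracket x w0 0.
  rewrite /digit_bracket (@mu_ext _ _ mu (cyl 0 w0) L) ?mu_L; last by move=> v; split => [[]|].
  rewrite (@mu_ext _ _ mu _ (fun _ => False)) ?(mu_set0 Hmu); first lra.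
  by move=> v; split => // [[_ [_ []]]].
have Hresp u u' n : agree n u u' -> digit_bracket x u n -> digit_bracket x u' n.
  by move=> Ha; rewrite /digit_bracket (lex_below_agree Ha) (cyl_agree Ha).
have [w Hw] := greedy_word Hbr0 (@digit_bracketS x) Hresp.
have Lw : L w.
  apply: NNPP => Nw; have [n Hn] := L_closed Nw.
  have [Hlo Hhi] := Hw n.
  have [z [Lz Hz]] : exists z, cyl n w z by apply: (mu_gt0_nonempty Hmu); lra.
  by apply: (Hn z) => //; exact: agree_sym.
exists w; split => //; apply: NNPP => Hne.
have [n Hn] := cyl_mu_small w (Rabs_pos_lt _ (Rminus_eq_contra _ _ Hne)).
have [Hlo Hhi] := Hw n; have [Hb1 Hb2] := phi_mu_bracket n w.
by move: Hn; apply: Rle_not_lt; apply: Rabs_le; lra.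
Qed.

Lemma ex_upper x : 0 <= x < 1 -> exists w, upper w /\ phim w = x.
Proof.
move=> Hx; have [w [Lw Ew]] := phi_mu_surj Hx.
case: (classic (upper w)) => Hu; first by exists w.
have [v [Lv [Hwv Hn]]] : exists v, L v /\ lex_lt w v /\ ~ phim w < phim v.
  apply: NNPP => H; apply: Hu; split => // v Lv Hwv.
  by apply: NNPP => H'; apply: H; exists v.
have Ev : phim v = phim w by have := phi_mu_mono (or_intror Hwv); lra.
exists v; split; last by rewrite Ev.
split => // v' Lv' Hvv'; apply: NNPP => H'.
by have := phi_mu_lt_across Lv Hwv Hvv'; have := phi_mu_mono (or_intror Hvv'); lra.
Qed.

Definition right_cyl n w := fun v => L v /\ lex_lt w v /\ agree n v w.

Lemma borel_right_cyl n w : borel (right_cyl n w).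
Proof.
apply: borelI; first exact: borel_L.
apply: borelI; first exact/borel_open/open_lex_gt.
by apply: (@borel_prefix _ _ n) => v v' Hv H; apply: agree_trans (agree_sym Hv) H.
Qed.

Lemma mu_L_gt w : mu (fun v => L v /\ lex_lt w v) = 1 - phim w.
Proof.
rewrite -mu_L (mu_split Hmu (borel_L_le w) (borel_L_gt w) (S := L)) /phi_mu; first ring.
- by move=> v [_ H1] [_ H2]; exact: lex_lt_nle H2 H1.
- move=> v; split; last by case=> [[]|[]].
  by move=> Lv; case: (lex_leVgt v w) => H; [left | right].
Qed.

(* Otherwise [(w, m]] would be the atom [{m}], which carries no mass. *)
Lemma upper_no_successor w m : upper w -> L m -> lex_lt w m ->
  ~ (forall z, L z -> lex_lt w z -> lex_le m z).
Proof.
move=> [Lw Hup] Lm Hwm Hmin; have := Hup m Lm Hwm.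
rewrite (phi_muD (or_intror Hwm)).
have : mu (fun z => L z /\ lex_lt w z /\ lex_le z m) <= 0.
  rewrite -(Hnat m); apply: (mu_le Hmu (borel_L_oc w m) (borel_closed (@closed_eq _ _ m))).
  by move=> z [Lz [Hwz Hzm]]; exact: lex_le_antisym Hzm (Hmin z Lz Hwz).
lra.
Qed.

Lemma right_cyl_gt0 n w : upper w -> phim w < 1 -> 0 < mu (right_cyl n w).
Proof.
move=> Hu Hw1; have [Lw Hup] := Hu.
apply: NNPP => /Rnot_lt_le HnE.
case: (classic (exists v, right_cyl n w v)) => [[v [Lv [Hwv Ha]]]|Hno].
- have := Hup v Lv Hwv; rewrite (phi_muD (or_intror Hwv)).
  have : mu (fun z => L z /\ lex_lt w z /\ lex_le z v) <= mu (right_cyl n w).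
    apply: (mu_le Hmu (borel_L_oc w v) (borel_right_cyl n w)).
    move=> z [Lz [Hwz Hzv]]; do 2!split => //.
    exact/agree_sym/(agree_lex_between (agree_sym Ha) (or_intror Hwz) Hzv).
  lra.
- pose G v := L v /\ lex_lt w v /\ ~ agree n v w.
  have HG z : L z -> lex_lt w z -> G z.
    by move=> Lz Hwz; do 2!split => //; move=> Ha; apply: Hno; exists z.
  have HGc : is_closed G.
    apply: closedI; first exact: L_closed.
    apply: (@prefix_determined_closed _ _ n) => v v' Hv [Hlt Hna].
    have Hna' : ~ agree n w v by move/agree_sym.
    have [H1 H2] := lex_lt_prefix Hlt Hna' (@agree_refl _ _ n w) Hv.
    by split => // /agree_sym.
  have [v0 [Lv0 Hv0]] : exists v, L v /\ lex_lt w v.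
    by apply: (mu_gt0_nonempty Hmu); rewrite mu_L_gt; lra.
  have [m [[Lm [Hwm _]] Hm]] := ex_lex_min HGc (ex_intro _ v0 (HG v0 Lv0 Hv0)).
  apply: (upper_no_successor Hu Lm Hwm) => z Lz Hwz; exact: Hm z (HG z Lz Hwz).
Qed.

Lemma phi_mu_add_right_cyl u v n : lex_lt u v -> ~ agree n u v ->
  phim u + mu (right_cyl n u) <= phim v.
Proof.
move=> Huv Hna.
apply: (mu_add_le Hmu (borel_L_le u) (borel_right_cyl n u) (borel_L_le v)).
- by move=> z [_ H1] [_ [H2 _]]; exact: lex_lt_nle H2 H1.
- by move=> z [Lz Hz]; split => //; exact: lex_le_trans Hz (or_intror Huv).
- move=> z [Lz [Hz Ha]]; split => //; right.
  by have [] := lex_lt_prefix Huv Hna (agree_sym Ha) (@agree_refl _ _ n v).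
Qed.

Lemma T_L_upper x w : upper w -> phim w = x -> T_L L mu x = phim (shift w).
Proof.
move=> Hu Ew; rewrite /T_L.
set P := fun y => _.
have HP : exists y, P y.
  exists (phim (shift w)), w; split; first by case: Hu.
  by split => //; apply/phi_iota; [case: Hu | split].
have [w' [Lw' [Hphi <-]]] := epsilon_spec (inhabits 0) P HP.
have [E' Hu'] := proj1 (phi_iota x Lw') Hphi.
by rewrite /kappa /phi /= (upper_inj Hu' Hu); last by rewrite E' Ew.
Qed.

Definition mass_head_lt a := mu (fun v => L v /\ (v 0%nat < a)%O).
Definition mass_head_le a := mu (fun v => L v /\ (v 0%nat <= a)%O).

Lemma borel_L_head (P : A -> Prop) : borel (fun v => L v /\ P (v 0%nat)).
Proof. by apply: (@borel_L_prefix 1) => v v' Hv; rewrite (Hv 0%nat). Qed.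

Lemma mass_head_lt_ge0 a : 0 <= mass_head_lt a.
Proof. exact: (mu_ge0 Hmu (borel_L_head (fun c => (c < a)%O))). Qed.

Lemma mass_head_le_le1 a : mass_head_le a <= 1.
Proof. exact: (mu_le1 Hmu (borel_L_head (fun c => (c <= a)%O))). Qed.

Lemma mass_head_lt_le v : L v -> mass_head_lt (v 0%nat) < mass_head_le (v 0%nat).
Proof.
move=> Lv; have := cyl_gt0 1 Lv.
have : mass_head_lt (v 0%nat) + mu (cyl 1 v) <= mass_head_le (v 0%nat).
  apply: (mu_add_le Hmu (borel_L_head (fun b => (b < v 0%nat)%O)) (borel_cyl 1 v)
    (borel_L_head (fun b => (b <= v 0%nat)%O))).
  - by move=> z [_ H1] [_ H2]; move: H1; rewrite (H2 0%nat) // ltxx.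
  - by move=> z [Lz H]; split => //; exact: ltW.
  - by move=> z [Lz H]; split => //; rewrite (H 0%nat).
lra.
Qed.

Lemma mass_head_le_lt b a : (b < a)%O -> mass_head_le b <= mass_head_lt a.
Proof.
move=> Hba; apply: (mu_le Hmu (borel_L_head (fun c => (c <= b)%O))
  (borel_L_head (fun c => (c < a)%O))).
by move=> v [Lv Hv]; split => //; exact: le_lt_trans Hv Hba.
Qed.

Lemma head_bounds w : upper w -> phim w < 1 ->
  mass_head_lt (w 0%nat) <= phim w < mass_head_le (w 0%nat).
Proof.
move=> Hu Hw1; have Lw := proj1 Hu; split.
- apply: (mu_le Hmu (borel_L_head (fun c => (c < w 0%nat)%O)) (borel_L_le w)).
  by move=> v [Lv Hv]; split => //; right; exact: lex_lt_head.
- have := right_cyl_gt0 1 Hu Hw1.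
  have : phim w + mu (right_cyl 1 w) <= mass_head_le (w 0%nat).
    apply: (mu_add_le Hmu (borel_L_le w) (borel_right_cyl 1 w)
      (borel_L_head (fun b => (b <= w 0%nat)%O))).
    + by move=> v [_ H1] [_ [H2 _]]; exact: lex_lt_nle H2 H1.
    + by move=> v [Lv Hv]; split => //; exact: lex_le_head.
    + by move=> v [Lv [_ H]]; split => //; rewrite (H 0%nat).
  lra.
Qed.

Lemma head_of_bounds w a : upper w -> phim w < 1 ->
  mass_head_lt a <= phim w < mass_head_le a -> w 0%nat = a.
Proof.
move=> Hu Hw1 [Hl Hr]; have [Hl' Hr'] := head_bounds Hu Hw1.
by case: (ltgtP (w 0%nat) a) => // /mass_head_le_lt; lra.
Qed.

(* [(u, v]] lies in the cylinder of the common first letter, and the shift maps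
   it into [(shift u, shift v)], so sigma-invariance transports its mass. *)
Lemma phi_mu_shift_lt u v : u 0%nat = v 0%nat -> phim u < phim v ->
  phim (shift u) < phim (shift v).
Proof.
move=> E0 Hlt; have Huv := lex_lt_of_phi_mu_lt Hlt.
rewrite (phi_muD (lex_le_shift E0 (or_intror Huv))).
rewrite (phi_muD (or_intror Huv)) in Hlt.
have Hb := borel_L_oc (shift u) (shift v); rewrite -(Hinv Hb).
have : mu (fun z => L z /\ lex_lt u z /\ lex_le z v) <=
       mu (fun z => L (shift z) /\ lex_lt (shift u) (shift z) /\ lex_le (shift z) (shift v)).
  apply: (mu_le Hmu (borel_L_oc u v) (borel_shift Hb)) => z [Lz [H1 H2]].
  have Ha1 : agree 1 u v by move=> i; rewrite ltnS leqn0 => /eqP ->.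
  have Ez : u 0%nat = z 0%nat by apply: (agree_lex_between Ha1 (or_intror H1) H2).
  split; first exact: L_shift.
  by split; [exact: lex_lt_shift | apply: lex_le_shift => //; rewrite -Ez].
lra.
Qed.

Lemma phi_mu_shift_right_cont w : upper w -> phim w < 1 ->
  forall eps, 0 < eps -> exists delta, 0 < delta /\ forall v,
    phim w < phim v < phim w + delta -> Rabs (phim (shift v) - phim (shift w)) < eps.
Proof.
move=> Hu Hw1 eps Heps; have [n Hn] := cyl_mu_small (shift w) Heps.
exists (mu (right_cyl n.+1 w)); split; first exact: right_cyl_gt0.
move=> v [Hlt Hlt']; have Hwv := lex_lt_of_phi_mu_lt Hlt.
have Ha : agree n.+1 w v.
  by apply: NNPP => Hna; have := phi_mu_add_right_cyl Hwv Hna; lra.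
have Hs : lex_lt (shift w) (shift v) by apply: lex_lt_shift (Ha 0%nat _) Hwv.
have Hsub : mu (fun z => L z /\ lex_lt (shift w) z /\ lex_le z (shift v)) <=
            mu (cyl n (shift w)).
  apply: (mu_le Hmu (borel_L_oc _ _) (borel_cyl _ _)) => z [Lz [H1 H2]].
  split => //; apply: agree_sym.
  exact: agree_lex_between (agree_shift Ha) (or_intror H1) H2.
have := mu_ge0 Hmu (borel_L_oc (shift w) (shift v)).
by rewrite (phi_muD (or_intror Hs)) => H0; rewrite Rabs_pos_eq; lra.
Qed.

Lemma I_La_upper a x :
  I_La L mu a x <-> 0 <= x < 1 /\ exists w, upper w /\ phim w = x /\ w 0%nat = a.
Proof.
have Cyl1 w : Cyl L [:: a] w <-> L w /\ w 0%nat = a.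
  by rewrite /Cyl /mkseq /=; split => [[? []]|[? ->]].
split.
- move=> [Hx [w [Lw [/(phi_iota x Lw) [E Hu] /Cyl1 [_ Ea]]]]].
  by split => //; exists w.
- move=> [Hx [w [Hu [E Ea]]]]; have Lw := proj1 Hu; split => //.
  by exists w; split => //; split; [exact/(phi_iota x Lw) | exact/Cyl1].
Qed.

Lemma I_La_partition x : 0 <= x < 1 ->
  exists a, I_La L mu a x /\ forall b, I_La L mu b x -> b = a.
Proof.
move=> Hx; have [w [Hu E]] := ex_upper Hx.
exists (w 0%nat); split; first by apply/I_La_upper; split => //; exists w.
move=> b /I_La_upper [_ [w' [Hu' [E' <-]]]].
by rewrite (upper_inj Hu' Hu) // E E'.
Qed.

Lemma I_La_interval a : (exists x, I_La L mu a x) ->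
  exists l r, l < r /\ forall x, I_La L mu a x <-> l <= x < r.
Proof.
move=> [x0 /I_La_upper [_ [v [[Lv _] [_ <-]]]]].
exists (mass_head_lt (v 0%nat)), (mass_head_le (v 0%nat)).
split => [|x]; first exact: mass_head_lt_le.
split.
- move=> /I_La_upper [Hx [w [Hw [E <-]]]]; rewrite -E; apply: head_bounds => //; lra.
- move=> Hx; have Hx1 : 0 <= x < 1.
    by have := mass_head_lt_ge0 (v 0%nat); have := mass_head_le_le1 (v 0%nat); lra.
  have [w [Hu E]] := ex_upper Hx1.
  apply/I_La_upper; split => //; exists w; do 2!split => //.
  by apply: head_of_bounds => //; rewrite E; lra.
Qed.

Lemma T_L_right_continuous x : 0 <= x < 1 -> forall eps, 0 < eps ->
  exists delta, 0 < delta /\ forall y, 0 <= y < 1 -> x <= y < x + delta ->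
    Rabs (T_L L mu y - T_L L mu x) < eps.
Proof.
move=> Hx eps Heps; have [wx [Hux Ex]] := ex_upper Hx.
have [delta [Hd Hc]] := phi_mu_shift_right_cont Hux ltac:(lra) Heps.
exists delta; split => // y Hy [Hxy Hyd].
case: (Req_dec x y) => [<-|Hne]; first by rewrite Rminus_diag Rabs_R0.
have [wy [Huy Ey]] := ex_upper Hy.
by rewrite (T_L_upper Huy Ey) (T_L_upper Hux Ex); apply: Hc; lra.
Qed.

Lemma T_L_increasing a x y : I_La L mu a x -> I_La L mu a y -> x < y ->
  T_L L mu x < T_L L mu y.
Proof.
move=> /I_La_upper [_ [wx [Hux [Ex Eax]]]] /I_La_upper [_ [wy [Huy [Ey Eay]]]] Hxy.
rewrite (T_L_upper Huy Ey) (T_L_upper Hux Ex).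
by apply: phi_mu_shift_lt; [rewrite Eax Eay | lra].
Qed.

End ShiftMeasure.

Theorem mainTheorem9 (d : Order.disp_t) (A : finOrderType d)
  (L : word A -> Prop) (mu : (word A -> Prop) -> R) :
  is_shift L ->
  is_prob_measure_on L mu ->
  sigma_invariant mu ->
  nonatomic mu ->
  regular mu ->
  positive_on_cylinders L mu ->
  (forall x, 0 <= x < 1 ->
     exists a, I_La L mu a x /\ forall b, I_La L mu b x -> b = a) /\
  (forall a, (exists x, I_La L mu a x) ->
     exists l r, l < r /\ forall x, I_La L mu a x <-> l <= x < r) /\
  (forall x, 0 <= x < 1 -> forall eps, 0 < eps ->
     exists delta, 0 < delta /\
       forall y, 0 <= y < 1 -> x <= y < x + delta ->
         Rabs (T_L L mu y - T_L L mu x) < eps) /\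
  (forall a x y, I_La L mu a x -> I_La L mu a y -> x < y ->
     T_L L mu x < T_L L mu y).
Proof.
move=> HL Hmu Hinv Hnat _ Hpos; split; [|split; [|split]].
- exact: I_La_partition.
- exact: I_La_interval.
- exact: T_L_right_continuous.
- exact: T_L_increasing.
Qed.
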